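(* Let $q$ be a prime power, and let $D_1$ be a linear $[n,k]$ code over $\mathbb{F}_q$ with $k\times n$ generator matrix $G_1$. Let $\mathrm{MAut}(D_1)$ be the group of $n\times n$ monomial matrices $P$ over $\mathbb{F}_q$ with $D_1P=D_1$, and let $f:\mathrm{MAut}(D_1)\to \mathrm{GL}(k,q)$ be the homomorphism defined by $f(P)G_1=G_1P$. Let $m$ be a positive integer and let $a,b\in\mathbb{F}_q^k$. Suppose that the column vectors $a^T$ and $b^T$ lie in the same orbit of the image $\mathrm{im}(f)\le \mathrm{GL}(k,q)$ acting on $\mathbb{F}_q^k$ (column vectors) by left multiplication. Then the $[n+m,k]$ codes over $\mathbb{F}_q$ with generator matrices \[\begin{pmatrix} G_1 & a^T & \cdots & a^T\end{pmatrix}\quad\text{and}\quad \begin{pmatrix} G_1 & b^T & \cdots & b^T\end{pmatrix}\] (each with $m$ copies of the appended column) are monomially equivalent.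
   Context: Two codes $C,C'$ of length $N$ over $\mathbb{F}_q$ are monomially equivalent if there is an $N\times N$ monomial matrix $M$ over $\mathbb{F}_q$ (a permutation matrix times an invertible diagonal matrix) such that $C'=CM=\{cM : c\in C\}$. For a code $C$, $CM$ means the image of $C$ under right multiplication by $M$, codewords being row vectors. *)

From HB Require Import structures.
From mathcomp Require Import all_boot all_order all_algebra all_fingroup.
Set Implicit Arguments. Unset Strict Implicit. Unset Printing Implicit Defensive.
Import GRing.Theory.
Local Open Scope ring_scope.

Definition monomial_mx (F : fieldType) (n : nat) (M : 'M[F]_n) : Prop :=
  exists (s : 'S_n) (d : 'rV[F]_n),
    (forall i, d 0 i != 0) /\ M = perm_mx s *m diag_mx d.

(* Codes are row spaces of generator matrices.  C' = C M with C = rowspace G,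
   C' = rowspace G' means rowspace (G *m M) = rowspace G'. *)
Definition mon_equiv (F : fieldType) (k N : nat) (G G' : 'M[F]_(k, N)) : Prop :=
  exists M : 'M[F]_N, monomial_mx M /\ (G *m M == G')%MS.

Definition MAut (F : fieldType) (k n : nat) (G : 'M[F]_(k, n)) (P : 'M[F]_n) : Prop :=
  monomial_mx P /\ (G *m P == G)%MS.

Definition im_f (F : fieldType) (k n : nat) (G : 'M[F]_(k, n)) (A : 'M[F]_k) : Prop :=
  exists P : 'M[F]_n, MAut G P /\ A *m G = G *m P.

Definition ext_gen (F : fieldType) (k n m : nat) (G : 'M[F]_(k, n)) (c : 'rV[F]_k)
  : 'M[F]_(k, n + m) :=
  row_mx G (\matrix_(i < k, j < m) c 0 i).

From HB Require Import structures.
From mathcomp Require Import all_boot all_order all_algebra all_fingroup.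
Set Implicit Arguments. Unset Strict Implicit. Unset Printing Implicit Defensive.
Import GRing.Theory.
Local Open Scope ring_scope.

(* An automorphism P of the code of G1 yields A with A G1 = G1 P, where A is
   invertible since G1 has full row rank.  Multiplying ( G1 | a^T ... a^T ) on the left by A and on the
   right by diag(P^-1, 1) gives ( G1 | (A a^T) ... (A a^T) ), which generates
   the same code because A is invertible, while diag(P^-1, 1) is monomial. *)

Lemma perm_mx_entry (R : pzSemiRingType) n (s : 'S_n) i j :
  (perm_mx s : 'M[R]_n) i j = (s i == j)%:R.
Proof. by rewrite perm_mxEsub !mxE. Qed.

Lemma monomial_mx_inv (F : fieldType) n (P : 'M[F]_n) :
  monomial_mx P -> exists2 Q, monomial_mx Q & P *m Q = 1%:M.
Proof.
case=> s [d [d_neq0 ->]].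
pose d' := \row_j (d 0 (s j))^-1.
exists (perm_mx s^-1 *m diag_mx d').
  by exists s^-1%g, d'; split=> // i; rewrite mxE invr_eq0.
apply/matrixP => i j; rewrite !mul_mx_diag mxE (bigD1 (s i)) //= big1 ?addr0.
  rewrite !mxE eqxx permK mul1r.
  by case: eqP => [->|_]; rewrite ?mul1r ?divff // !mul0r mulr0.
by move=> l /negbTE s_neq; rewrite !mxE eq_sym s_neq !mul0r.
Qed.

Section BlockPermutation.

Variables n m : nat.

Definition lshift_perm_fun (s : 'S_n) (i : 'I_(n + m)) : 'I_(n + m) :=
  match split i with inl j => lshift m (s j) | inr j => rshift n j end.

Lemma lshift_perm_funK (s : 'S_n) :
  cancel (lshift_perm_fun s) (lshift_perm_fun s^-1).
Proof.
move=> i; rewrite /lshift_perm_fun -(splitK i); case: (split i) => j /=.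
  by rewrite (unsplitK (inl _ : _ + 'I_m)) /= (unsplitK (inl _ : _ + 'I_m)) permK.
by rewrite (unsplitK (inr _ : 'I_n + _)) /= (unsplitK (inr _ : 'I_n + _)).
Qed.

Definition lshift_perm (s : 'S_n) : 'S_(n + m) :=
  perm (can_inj (lshift_perm_funK s)).

Lemma monomial_mx_block (F : fieldType) (M : 'M[F]_n) :
  monomial_mx M -> monomial_mx (block_mx M 0 0 1%:M : 'M_(n + m)).
Proof.
case=> s [d [d_neq0 ->]].
exists (lshift_perm s), (row_mx d (const_mx 1)); split.
  move=> i; rewrite -(splitK i); case: (split i) => j /=.
    by rewrite (row_mxEl d).
  by rewrite (row_mxEr d) mxE oner_neq0.
apply/matrixP => i j; rewrite [in RHS]mul_mx_diag [in RHS]mxE perm_mx_entry permE.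
rewrite /lshift_perm_fun -(splitK i) -(splitK j).
case: (split i) => i'; case: (split j) => j' /=.
- rewrite block_mxEul mul_mx_diag mxE perm_mx_entry (row_mxEl d).
  by rewrite (unsplitK (inl _ : _ + 'I_m)) eq_lshift.
- rewrite block_mxEur (row_mxEr d) mxE (unsplitK (inl _ : _ + 'I_m)).
  by rewrite eq_lrshift mul0r.
- rewrite block_mxEdl (row_mxEl d) mxE (unsplitK (inr _ : 'I_n + _)).
  by rewrite eq_rlshift mul0r.
- rewrite block_mxEdr (row_mxEr d) !mxE (unsplitK (inr _ : 'I_n + _)).
  by rewrite eq_rshift mulr1.
Qed.

End BlockPermutation.

Lemma unitmx_intertwine (F : fieldType) k n (G : 'M[F]_(k, n)) A P :
  row_free G -> P \in unitmx -> A *m G = G *m P -> A \in unitmx.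
Proof.
move=> G_free P_unit AG_GP; rewrite -row_free_unit -row_leq_rank.
have rank_GP : \rank (G *m P) = k by rewrite mxrankMfree ?row_free_unit //; apply/eqP.
by rewrite -{1}rank_GP -AG_GP mxrankM_maxl.
Qed.

Lemma mul_ext_gen (F : fieldType) k n m (G : 'M[F]_(k, n)) (c : 'rV_k) (A : 'M_k) :
  A *m ext_gen m G c = ext_gen m (A *m G) (A *m c^T)^T.
Proof.
rewrite /ext_gen mul_mx_row; congr row_mx.
by apply/matrixP => i j; rewrite !mxE; apply: eq_bigr => l _; rewrite !mxE.
Qed.

Lemma ext_gen_mul_block (F : fieldType) k n m (G : 'M[F]_(k, n)) (c : 'rV_k) (Q : 'M_n) :
  ext_gen m G c *m block_mx Q 0 0 1%:M = ext_gen m (G *m Q) c.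
Proof. by rewrite /ext_gen mul_row_block !mulmx0 addr0 add0r mulmx1. Qed.

Theorem lemma2p1 (F : finFieldType) (n k m : nat) (G1 : 'M[F]_(k, n))
  (a b : 'rV[F]_k) :
  row_free G1 ->
  (0 < m)%N ->
  (exists A : 'M[F]_k, im_f G1 A /\ A *m a^T = b^T) ->
  mon_equiv (ext_gen m G1 a) (ext_gen m G1 b).
Proof.
move=> G1_free _ [A [[P [[P_mon _] AG_GP]] Aa_b]].
have [Q Q_mon PQ_1] := monomial_mx_inv P_mon.
have A_unit : A \in unitmx.
  by apply: unitmx_intertwine G1_free _ AG_GP; case/mulmx1_unit: PQ_1.
exists (block_mx Q 0 0 1%:M); split; first exact: monomial_mx_block.
have -> : ext_gen m G1 b = A *m (ext_gen m G1 a *m block_mx Q 0 0 1%:M).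
  by rewrite ext_gen_mul_block mul_ext_gen mulmxA AG_GP -mulmxA PQ_1 mulmx1 Aa_b trmxK.
by apply/eqmxP/eqmx_sym/eqmxMfull; rewrite row_full_unit.
Qed.
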